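(* Let $n\ge 2$ and let $(\epsilon_k)_{k\ge1}$ be a sequence in $(0,1)$ strictly decreasing to $0$. For $\vec a = (a_1,\dots,a_n)\in\ell^\infty_n$ and $1\le r\le n$ put $\varphi^r_k(\vec a) = a_r(1-\epsilon_k) + \frac{\epsilon_k}{n-1}\sum_{j\ne r}a_j$, and $\psi_k(\vec a) = (\varphi^1_k(\vec a),\dots,\varphi^n_k(\vec a))\in\ell^\infty_n$. Let $H = \bigoplus_{k=1}^\infty H_k$ with each $H_k = \mathbb{C}^n$, and define $\Psi : \ell^\infty_n\to B(H)$ by letting $\Psi(\vec a)$ be the diagonal operator acting on $H_k$ as the diagonal matrix with diagonal $\psi_k(\vec a)$. Then $\Psi$ is a unital complete isometry, and if $p,q\in B(H)$ are projections such that $(1-q)\Psi(\vec a) = \Psi(\vec a)(1-p)$ for all $\vec a$ and $\vec a\mapsto (1-q)\Psi(\vec a)$ is a triple morphism, then $p = q = 1$ (so this triple morphism is the zero map). In particular, there is no projection $p\in B(H)$ other than $1$ for which $(1-p)\Psi(\cdot) = \Psi(\cdot)(1-p)$ is a *-homomorphism.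
   Context: $\ell^\infty_n$ is $\mathbb{C}^n$ with the sup norm, a commutative $C^*$-algebra. A triple morphism is a linear map $T$ with $T(xy^*z) = T(x)T(y)^*T(z)$. *)

From HB Require Import structures.
From mathcomp Require Import all_boot all_order all_algebra.
From mathcomp Require Import all_classical all_reals all_analysis.
From mathcomp Require Import complex.
Set Implicit Arguments. Unset Strict Implicit. Unset Printing Implicit Defensive.
Import Order.TTheory GRing.Theory Num.Theory.
Import numFieldNormedType.Exports.
Local Open Scope ring_scope.
Local Open Scope classical_set_scope.

Section Defs.
Variables (R : realType) (n : nat).
Local Notation C := (R[i]).

(* ell^infty_n = C^n (commutative C*-algebra, pointwise operations). *)
Definition linf := 'I_n -> C.

(* Vectors indexed like H = (+)_{k} H_k, H_k = C^n : x k i is the i-th coordinate in H_k.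
   (H_k is indexed by k : nat starting at 0.) *)
Definition vecH := nat -> 'I_n -> C.

Definition csq (z : C) : R := complex.Re z ^+ 2 + complex.Im z ^+ 2.

Definition sqnormH (x : vecH) : \bar R :=
  (\sum_(k <oo) (\sum_(i < n) csq (x k i))%:E)%E.

Definition inH (x : vecH) : Prop := (sqnormH x < +oo)%E.

Definition normH (x : vecH) : R := Num.sqrt (fine (sqnormH x)).

Definition innerH (x y : vecH) : C :=
  Complex (limn (fun N : nat => \sum_(0 <= k < N) (complex.Re (\sum_(i < n) x k i * conjc (y k i)) : R)))
          (limn (fun N : nat => \sum_(0 <= k < N) (complex.Im (\sum_(i < n) x k i * conjc (y k i)) : R))).

Definition op := vecH -> vecH.

Definition op_eq (T S : op) : Prop := forall x, inH x -> T x = S x.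

Definition idop : op := fun x => x.

Definition bounded_op (T : op) : Prop :=
  [/\ forall x, inH x -> inH (T x),
      forall (c : C) x y, inH x -> inH y ->
        T (fun k i => c * x k i + y k i) = (fun k i => c * T x k i + T y k i)
    & exists M : R, forall x, inH x -> normH (T x) <= M * normH x].

Definition is_adjoint (T S : op) : Prop :=
  (forall y, inH y -> inH (S y)) /\
  forall x y, inH x -> inH y -> innerH (T x) y = innerH x (S y).

Definition projection (p : op) : Prop :=
  [/\ bounded_op p, forall x, inH x -> p (p x) = p x & is_adjoint p p].

Definition op_linear (F : linf -> op) : Prop :=
  forall (c : C) (a b : linf),
    op_eq (F (fun r => c * a r + b r)) (fun x k i => c * F a x k i + F b x k i).

Definition triple_morphism (F : linf -> op) : Prop :=
  op_linear F /\
  forall (a b c : linf) (S : op), is_adjoint (F b) S ->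
    op_eq (F (fun r => a r * conjc (b r) * c r)) (fun x => F a (S (F c x))).

Definition star_hom (F : linf -> op) : Prop :=
  [/\ op_linear F,
      forall a b : linf, op_eq (F (fun r => a r * b r)) (fun x => F a (F b x))
    & forall a : linf, is_adjoint (F a) (F (fun r => conjc (a r)))].

(* the maps of the statement; eps k is epsilon_{k+1} *)
Definition psi (eps : nat -> R) (k : nat) (a : linf) : linf :=
  fun r => a r * ((1 - eps k)%:C)%C + ((eps k / (n.-1)%:R)%:C)%C * \sum_(j < n | j != r) a j.

Definition Psi (eps : nat -> R) (a : linf) : op :=
  fun x k i => psi eps k a i * x k i.

Definition normCv (m : nat) (v : 'I_m -> C) : R := Num.sqrt (\sum_(i < m) csq (v i)).

Definition normCmx (m : nat) (B : 'I_m -> 'I_m -> C) : \bar R :=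
  ereal_sup [set (normCv (fun i => \sum_(j < m) B i j * v j))%:E
            | v in [set v : 'I_m -> C | normCv v <= 1]].

(* C*-norm on M_m(ell^infty_n) = M_m(C)^n : max over coordinates *)
Definition mnorm_linf (m : nat) (A : 'I_m -> 'I_m -> linf) : \bar R :=
  ereal_sup [set normCmx (fun i j => A i j r) | r in [set: 'I_n]].

Definition normHm (m : nat) (xs : 'I_m -> vecH) : R :=
  Num.sqrt (\sum_(i < m) normH (xs i) ^+ 2).

(* norm on M_m(B(H)) = B(H^m) *)
Definition mnorm_BH (m : nat) (T : 'I_m -> 'I_m -> op) : \bar R :=
  ereal_sup [set (normHm (fun i k s => \sum_(j < m) T i j (xs j) k s))%:E
            | xs in [set xs : 'I_m -> vecH | (forall j, inH (xs j)) /\ normHm xs <= 1]].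

Definition unital_complete_isometry (F : linf -> op) : Prop :=
  [/\ op_linear F,
      op_eq (F (fun _ => 1)) idop
    & forall (m : nat) (A : 'I_m -> 'I_m -> linf),
        mnorm_linf A = mnorm_BH (fun i j => F (A i j))].

End Defs.

From HB Require Import structures.
From mathcomp Require Import all_boot all_order all_algebra.
From mathcomp Require Import all_classical all_reals all_analysis.
From mathcomp Require Import complex ring lra.
Set Implicit Arguments. Unset Strict Implicit. Unset Printing Implicit Defensive.
Import Order.TTheory GRing.Theory Num.Theory.
Import numFieldNormedType.Exports.
Local Open Scope ring_scope.
Local Open Scope classical_set_scope.

(* Hence the amplification of [Psi] to [m x m] matrices acts on the coordinate [s] of
   the block [k] by the matrix [(1 - eps_k) A(s) + eps_k/(n-1) sum_(t <> s) A(t)], a convex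
   combination of the [A(t)], whose norm is at most [max_r |A(r)|]; conversely, testing on
   vectors supported in one coordinate of one block and letting [eps_k -> 0] recovers [|A(r)|].
   For the rigidity part, each [Psi(e_r)] is diagonal with entries in (0, 1), so it is not
   idempotent on any nonzero vector.  But if [(1 - q) Psi(.) = Psi(.) (1 - p)] is a triple
   morphism (or a *-homomorphism), then [q = p] and [Psi(e_r)] is idempotent on the range of
   [1 - p], so that range is [0]. *)

Section complex_square.
Variable R : realType.
Local Notation C := R[i].

Lemma csq_ge0 (z : C) : 0 <= csq z.
Proof. by rewrite /csq addr_ge0 // sqr_ge0. Qed.

Lemma csq_eq0 (z : C) : csq z = 0 -> z = 0.
Proof.
case: z => a b; rewrite /csq /= => h.
have ha : a ^+ 2 = 0 by apply/eqP; rewrite eq_le sqr_ge0 andbT; nra.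
have hb : b ^+ 2 = 0 by apply/eqP; rewrite eq_le sqr_ge0 andbT; nra.
by move: ha hb => /eqP; rewrite sqrf_eq0 => /eqP -> /eqP; rewrite sqrf_eq0 => /eqP ->.
Qed.

Lemma csq_real (c : R) : csq (c%:C)%C = c ^+ 2.
Proof. by rewrite /csq /= expr0n addr0. Qed.

Lemma csq0 : csq (0 : C) = 0.
Proof. by rewrite /csq /= expr0n addr0. Qed.

Lemma csqM (w z : C) : csq (w * z) = csq w * csq z.
Proof. by case: w => a b; case: z => c d; rewrite /csq /=; ring. Qed.

Lemma csqB_le (w z : C) : csq (w - z) <= 2 * (csq w + csq z).
Proof.
case: w => a b; case: z => c d; rewrite /csq /=.
by have := sqr_ge0 (a + c); have := sqr_ge0 (b + d); nra.
Qed.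

Lemma Re_mul_conjc_le (w z : C) : `|complex.Re (w * conjc z)| <= csq w + csq z.
Proof.
case: w => a b; case: z => c d; rewrite /csq /= ler_norml.
have := sqr_ge0 (a + c); have := sqr_ge0 (b + d).
have := sqr_ge0 (a - c); have := sqr_ge0 (b - d).
by move=> *; apply/andP; split; nra.
Qed.

Lemma Im_mul_conjc_le (w z : C) : `|complex.Im (w * conjc z)| <= csq w + csq z.
Proof.
case: w => a b; case: z => c d; rewrite /csq /= ler_norml.
have := sqr_ge0 (a + d); have := sqr_ge0 (b + c).
have := sqr_ge0 (a - d); have := sqr_ge0 (b - c).
by move=> *; apply/andP; split; nra.
Qed.

End complex_square.

Lemma sqrtr_le (R : rcfType) (a b : R) : 0 <= b -> a <= b ^+ 2 -> Num.sqrt a <= b.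
Proof. by move=> b0 h; rewrite -(ger0_norm b0) -sqrtr_sqr ler_wsqrtr. Qed.

Lemma le_of_le_addr_cvg0 (R : realType) (e : R ^nat) (x b c : R) :
  e @ \oo --> 0 -> (forall k, x <= b + e k * c) -> x <= b.
Proof.
move=> e0 h.
have hc : (fun k => b + e k * c) @ \oo --> b + 0 * c.
  by apply: cvgD; [apply: cvg_cst | apply: cvgM e0 (cvg_cst _)].
rewrite mul0r addr0 in hc.
by rewrite -(cvg_lim _ hc) //; apply: limr_ge; [apply: cvgP hc | apply: nearW].
Qed.

Section euclidean_norm.
Variables (R : realType) (m : nat).
Local Notation C := R[i].
Implicit Types (u v : 'I_m -> C) (B : 'I_m -> 'I_m -> C).

Definition cdot (a b : C) : R := complex.Re a * complex.Re b + complex.Im a * complex.Im b.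
Arguments cdot : simpl never.

Lemma csqD (a b : C) : csq (a + b) = csq a + csq b + 2 * cdot a b.
Proof. by case: a => a1 a2; case: b => b1 b2; rewrite /csq /cdot /=; ring. Qed.

Lemma csq_real_comb (s t : R) (a b : C) :
  csq ((s%:C)%C * a - (t%:C)%C * b) = s ^+ 2 * csq a - 2 * s * t * cdot a b + t ^+ 2 * csq b.
Proof. by case: a => a1 a2; case: b => b1 b2; rewrite /csq /cdot /=; ring. Qed.

Lemma normCv_ge0 v : 0 <= normCv v.
Proof. exact: sqrtr_ge0. Qed.

Lemma normCv_sqr v : normCv v ^+ 2 = \sum_i csq (v i).
Proof. by rewrite /normCv sqr_sqrtr // sumr_ge0 // => i _; apply: csq_ge0. Qed.

Lemma normCv_eq0 v : normCv v = 0 -> v = (fun _ => 0).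
Proof.
move=> v0; apply/funext => i; apply: csq_eq0.
have h0 : \sum_i csq (v i) = 0 by rewrite -normCv_sqr v0 expr0n.
by move/psumr_eq0P: h0 => -> // j _; apply: csq_ge0.
Qed.

Lemma normCv0 : normCv (fun _ : 'I_m => 0 : C) = 0.
Proof. by rewrite /normCv big1 ?sqrtr0 // => i _; rewrite csq0. Qed.

(* Expand [0 <= |Y u - X v|^2] with [X = |u|], [Y = |v|]. *)
Lemma cdot_sum_le u v : \sum_i cdot (u i) (v i) <= normCv u * normCv v.
Proof.
set X := normCv u; set Y := normCv v.
have [X0|Xn] := eqVneq X 0.
  by rewrite big1 ?X0 ?mul0r // => i _; rewrite (normCv_eq0 X0) /cdot /= !mul0r addr0.
have [Y0|Yn] := eqVneq Y 0.
  by rewrite big1 ?Y0 ?mulr0 // => i _; rewrite (normCv_eq0 Y0) /cdot /= !mulr0 addr0.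
have XY0 : 0 < X * Y by rewrite mulr_gt0 // lt_def ?Xn ?Yn normCv_ge0.
have h : 0 <= \sum_i csq ((Y%:C)%C * u i - (X%:C)%C * v i).
  by rewrite sumr_ge0 // => i _; apply: csq_ge0.
rewrite (eq_bigr _ (fun i _ => csq_real_comb Y X (u i) (v i))) in h.
rewrite !big_split /= sumrN -!mulr_sumr -!normCv_sqr -/X -/Y in h.
by rewrite -(ler_pM2l XY0); nra.
Qed.

Lemma normCvD u v : normCv (fun i => u i + v i) <= normCv u + normCv v.
Proof.
apply: sqrtr_le; first by rewrite addr_ge0 ?normCv_ge0.
rewrite (eq_bigr _ (fun i _ => csqD (u i) (v i))) big_split big_split /=.
rewrite -mulr_sumr -!normCv_sqr.
by have := cdot_sum_le u v; nra.
Qed.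

Lemma normCvZ (c : R) v : normCv (fun i => (c%:C)%C * v i) = `|c| * normCv v.
Proof.
rewrite /normCv (eq_bigr (fun i => c ^+ 2 * csq (v i))) => [|i _]; last by rewrite csqM csq_real.
by rewrite -mulr_sumr sqrtrM ?sqr_ge0 // sqrtr_sqr.
Qed.

Lemma normCv_sum (I : Type) (r : seq I) (P : pred I) (f : I -> 'I_m -> C) :
  normCv (fun i => \sum_(s <- r | P s) f s i) <= \sum_(s <- r | P s) normCv (f s).
Proof.
elim: r => [|s r IH]; first by under eq_fun do rewrite big_nil; rewrite big_nil normCv0.
under eq_fun do rewrite big_cons; rewrite big_cons; case: (P s) => //.
by apply: le_trans (normCvD _ _) _; rewrite lerD2l.
Qed.

Definition mxv (B : 'I_m -> 'I_m -> C) v : 'I_m -> C := fun i => \sum_j B i j * v j.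

Lemma mxv0 B : mxv B (fun _ => 0) = (fun _ => 0).
Proof. by apply/funext => i; rewrite /mxv big1 // => j _; rewrite mulr0. Qed.

Lemma mxvZ B (c : C) v : mxv B (fun j => c * v j) = (fun i => c * mxv B v i).
Proof. by apply/funext => i; rewrite /mxv mulr_sumr; apply: eq_bigr => j _; rewrite mulrCA. Qed.

Lemma normCmx_ge0 B : (0 <= normCmx B)%E.
Proof.
apply: le_ereal_sup_tmp; exists (normCv (mxv B (fun _ => 0)))%:E.
  by exists (fun _ => 0) => //=; rewrite normCv0 ler01.
by rewrite mxv0 normCv0.
Qed.

Lemma normCv_mxv_le B (N : R) : (forall v, normCv v <= 1 -> normCv (mxv B v) <= N) ->
  forall w, normCv (mxv B w) <= N * normCv w.
Proof.
move=> hB w; have [w0|wn] := eqVneq (normCv w) 0.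
  by rewrite w0 mulr0 (normCv_eq0 w0) mxv0 normCv0.
have wp : 0 < normCv w by rewrite lt_def wn normCv_ge0.
have := hB (fun j => (((normCv w)^-1)%:C)%C * w j).
rewrite mxvZ !normCvZ gtr0_norm ?invr_gt0 // mulVf // => /(_ (lexx 1)).
by rewrite ler_pdivrMl // mulrC.
Qed.

End euclidean_norm.

Section hilbert_space.
Variables (R : realType) (n : nat).
Local Notation C := R[i].
Local Notation vH := (vecH R n).
Implicit Types (x y : vH) (p q : op R n).

Definition sqnormHk x k := \sum_(i < n) csq (x k i).

Lemma sqnormHk_ge0 x k : 0 <= sqnormHk x k.
Proof. by apply: sumr_ge0 => i _; apply: csq_ge0. Qed.

Lemma sqnormH_ge0 x : (0 <= sqnormH x)%E.
Proof. by apply: nneseries_ge0 => k _ _; rewrite lee_fin sqnormHk_ge0. Qed.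

Lemma normH_sqr x : normH x ^+ 2 = fine (sqnormH x).
Proof. by rewrite /normH sqr_sqrtr // fine_ge0 // sqnormH_ge0. Qed.

Lemma inH_cvg x : inH x -> cvgn (series (sqnormHk x)).
Proof. by move=> hx; apply: nnseries_is_cvg => // k; apply: sqnormHk_ge0. Qed.

Lemma inH_le x y (z : vH) (M : R) : 0 <= M ->
  (forall k, sqnormHk z k <= M * (sqnormHk x k + sqnormHk y k)) ->
  inH x -> inH y -> inH z.
Proof.
move=> M0 hz hx hy; rewrite /inH.
apply: (@le_lt_trans _ _ (\sum_(k <oo) (M * (sqnormHk x k + sqnormHk y k))%:E)%E).
  by apply: lee_nneseries => k _; rewrite lee_fin ?sqnormHk_ge0 ?hz.
under eq_eseriesr do rewrite EFinM EFinD.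
rewrite nneseriesZl => [|k _]; last by rewrite adde_ge0 // lee_fin sqnormHk_ge0.
rewrite nneseriesD; [|by move=> k _ _; rewrite lee_fin sqnormHk_ge0..].
by apply: lte_mul_pinfty => //; apply: lte_add_pinfty.
Qed.

Lemma inH_sub x y : inH x -> inH y -> inH (fun k i => x k i - y k i).
Proof.
move=> hx hy; apply: (@inH_le x y _ 2 _ _ hx hy) => // k.
by rewrite /sqnormHk -big_split mulr_sumr; apply: ler_sum => i _; apply: csqB_le.
Qed.

Lemma inH_mul_bounded (c : nat -> 'I_n -> C) (M : R) x : 0 <= M ->
  (forall k i, csq (c k i) <= M) -> inH x -> inH (fun k i => c k i * x k i).
Proof.
move=> M0 hc hx; apply: (@inH_le x x _ M M0 _ hx hx) => k.
apply: (@le_trans _ _ (M * sqnormHk x k)); last by rewrite ler_wpM2l // lerDl sqnormHk_ge0.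
rewrite /sqnormHk mulr_sumr; apply: ler_sum => i _; rewrite csqM.
by apply: ler_wpM2r; [apply: csq_ge0 | apply: hc].
Qed.

Definition compl_op p : op R n := fun x k i => x k i - p x k i.

Lemma compl_op_eq0 p x : compl_op p x = (fun _ _ => 0) -> p x = x.
Proof.
move=> h; apply/funext => k; apply/funext => i; apply/eqP.
by rewrite eq_sym -subr_eq0 -/(compl_op p x k i) h.
Qed.

Lemma compl_op_fixed p x : compl_op p x = x -> p x = (fun _ _ => 0).
Proof.
move=> h; apply/funext => k; apply/funext => i.
by have /(congr1 (fun f => f k i))/eqP := h; rewrite /compl_op subr_eq addrC -subr_eq subrr => /eqP.
Qed.

Lemma compl_opI p q x : compl_op p x = compl_op q x -> p x = q x.
Proof.
move=> h; apply/funext => k; apply/funext => i.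
by have /(congr1 (fun f => f k i))/subrI := h.
Qed.

Lemma projection_compl_op p x : projection p -> inH x ->
  inH (compl_op p x) /\ p (compl_op p x) = (fun _ _ => 0).
Proof.
move=> [[hin hlin _] hidem _] hx; split; first exact: inH_sub (hin _ hx).
have -> : compl_op p x = (fun k i => -1 * p x k i + x k i).
  by apply/funext => k; apply/funext => i; rewrite mulN1r addrC.
rewrite hlin ?hidem //; last exact: hin.
by apply/funext => k; apply/funext => i; rewrite mulN1r addNr.
Qed.

Definition ipk x y k := \sum_(i < n) x k i * conjc (y k i).

Lemma cvg_series_ReIm_ipk x y : inH x -> inH y ->
  cvgn (series (fun k => complex.Re (ipk x y k))) /\
  cvgn (series (fun k => complex.Im (ipk x y k))).
Proof.
move=> hx hy.
have hs : cvgn (series (fun k => sqnormHk x k + sqnormHk y k)).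
  exact: (is_cvg_seriesD (inH_cvg hx) (inH_cvg hy)).
have hs0 k : 0 <= sqnormHk x k + sqnormHk y k by rewrite addr_ge0 // sqnormHk_ge0.
split; apply: normed_cvg; apply: (series_le_cvg _ hs0 _ hs) => k /=;
  rewrite ?normr_ge0 // /ipk raddf_sum; apply: le_trans (ler_norm_sum _ _ _) _;
  rewrite /sqnormHk -big_split; apply: ler_sum => i _; [exact: Re_mul_conjc_le | exact: Im_mul_conjc_le].
Qed.

Lemma innerHB x y x1 y1 x2 y2 : inH x1 -> inH y1 -> inH x2 -> inH y2 ->
  (forall k, ipk x y k = ipk x1 y1 k - ipk x2 y2 k) ->
  innerH x y = innerH x1 y1 - innerH x2 y2.
Proof.
move=> hx1 hy1 hx2 hy2 e.
have [cRe1 cIm1] := cvg_series_ReIm_ipk hx1 hy1.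
have [cRe2 cIm2] := cvg_series_ReIm_ipk hx2 hy2.
have eRe : (fun k => complex.Re (ipk x y k))
    = (fun k => complex.Re (ipk x1 y1 k)) - (fun k => complex.Re (ipk x2 y2 k)).
  by apply/funext => k; rewrite e raddfB.
have eIm : (fun k => complex.Im (ipk x y k))
    = (fun k => complex.Im (ipk x1 y1 k)) - (fun k => complex.Im (ipk x2 y2 k)).
  by apply/funext => k; rewrite e raddfB.
rewrite /innerH -[X in limn X]/(series _) -[X in Complex _ (limn X)]/(series _).
by rewrite -/(ipk x y) eRe eIm !lim_seriesB.
Qed.

Lemma is_adjoint_compl_op q : projection q -> is_adjoint (compl_op q) (compl_op q).
Proof.
move=> hq; have [[hin _ _] _ [_ hself]] := hq.
split=> [y hy|x y hx hy]; first exact: inH_sub (hin _ hy).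
have hqx := hin _ hx; have hqy := hin _ hy.
rewrite (@innerHB (compl_op q x) y x y (q x) y) // => [|k]; last first.
  by rewrite /ipk -sumrB; apply: eq_bigr => i _; rewrite mulrBl.
rewrite (@innerHB x (compl_op q y) x y x (q y)) // => [|k]; last first.
  by rewrite /ipk -sumrB; apply: eq_bigr => i _; rewrite /compl_op rmorphB mulrBr.
by rewrite hself.
Qed.

End hilbert_space.

Section hilbert_power.
Variables (R : realType) (n m : nat).
Local Notation vH := (vecH R n).
Implicit Types xs ys : 'I_m -> vH.

Lemma sum_sqnormH_le_fiberwise ys xs (c : R) :
  (forall k, \sum_i sqnormHk (ys i) k <= c * \sum_j sqnormHk (xs j) k) ->
  (\sum_i sqnormH (ys i) <= c%:E * \sum_j sqnormH (xs j))%E.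
Proof.
move=> hc; rewrite /sqnormH.
rewrite -!nneseries_sum => [|i k _|j k _]; last 2 first.
- by rewrite lee_fin sqnormHk_ge0.
- by rewrite lee_fin sqnormHk_ge0.
rewrite -nneseriesZl => [|k _]; last by rewrite sume_ge0 // => j _; rewrite lee_fin sqnormHk_ge0.
apply: lee_nneseries => [k _ _|k _]; first by rewrite sume_ge0 // => i _; rewrite lee_fin sqnormHk_ge0.
by rewrite !sumEFin -EFinM lee_fin hc.
Qed.

Lemma normHm_le_fiberwise ys xs (N : R) : 0 <= N -> (forall j, inH (xs j)) ->
  (forall k, \sum_i sqnormHk (ys i) k <= N ^+ 2 * \sum_j sqnormHk (xs j) k) ->
  normHm ys <= N * normHm xs.
Proof.
move=> N0 hxs hfib.
have fin_xs j : sqnormH (xs j) = (fine (sqnormH (xs j)))%:E.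
  by rewrite fineK // ge0_fin_numE ?sqnormH_ge0 //; apply: hxs.
have := sum_sqnormH_le_fiberwise hfib.
rewrite (eq_bigr _ (fun j _ => fin_xs j)) sumEFin -EFinM => hE.
have fin_ys i : sqnormH (ys i) = (fine (sqnormH (ys i)))%:E.
  rewrite fineK // ge0_fin_numE ?sqnormH_ge0 //; apply: le_lt_trans (le_trans _ hE) (ltry _).
  by rewrite (bigD1 i) //= leeDl // sume_ge0 // => j _; apply: sqnormH_ge0.
move: hE; rewrite (eq_bigr _ (fun i _ => fin_ys i)) sumEFin lee_fin => hE.
rewrite /normHm -[N in N * _](ger0_norm N0) -sqrtr_sqr -sqrtrM ?sqr_ge0 // ler_wsqrtr //.
by under eq_bigr do rewrite normH_sqr; under [X in _ <= _ * X]eq_bigr do rewrite normH_sqr.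
Qed.

End hilbert_power.

Section rigidity.
Variables (R : realType) (n : nat) (eps : nat -> R).
Hypothesis n_ge2 : (2 <= n)%N.
Hypothesis eps01 : forall k, 0 < eps k < 1.
Local Notation C := R[i].
Local Notation vH := (vecH R n).

Lemma predn_gt0 : (0 < n.-1)%N.
Proof. by case: n n_ge2 => [|[|m]]. Qed.

Lemma sum_neq_const (r : 'I_n) (c : C) : \sum_(j < n | j != r) c = c *+ n.-1.
Proof. by rewrite sumr_const cardC1 card_ord. Qed.

Lemma psi1 k (r : 'I_n) : psi eps k (fun _ => 1) r = 1.
Proof.
have hm : (n.-1)%:R != 0 :> R by rewrite pnatr_eq0 -lt0n predn_gt0.
rewrite /psi sum_neq_const mul1r -(rmorph_nat (real_complex R)).
by rewrite -!rmorphM -rmorphD /= mulfVK // subrK.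
Qed.

Lemma Psi1 (x : vH) : Psi eps (fun _ => 1) x = x.
Proof. by apply/funext => k; apply/funext => i; rewrite /Psi psi1 mul1r. Qed.

Definition ebasis (r : 'I_n) : linf R n := fun j => (j == r)%:R.

Lemma ebasis_mul r : (fun j => ebasis r j * ebasis r j) = ebasis r.
Proof. by apply/funext => j; rewrite /ebasis; case: (j == r); rewrite ?mulr1 ?mulr0. Qed.

Lemma ebasis_triple r : (fun j => ebasis r j * conjc 1 * ebasis r j) = ebasis r.
Proof. by rewrite conjc1; under eq_fun do rewrite mulr1; apply: ebasis_mul. Qed.

(* The diagonal entries of [psi_k(e_r)] are [1 - eps k] and [eps k / (n - 1)]. *)
Lemma psi_ebasis k (r i : 'I_n) :
  exists2 c : R, 0 < c < 1 & psi eps k (ebasis r) i = (c%:C)%C.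
Proof.
have /andP[e0 e1] := eps01 k.
have hm1 : 1 <= (n.-1)%:R :> R by rewrite ler1n predn_gt0.
rewrite /psi /ebasis; case: (eqVneq i r) => [->|hir].
  exists (1 - eps k); first by apply/andP; split; lra.
  by rewrite mul1r big1 ?mulr0 ?addr0 // => j /negbTE ->.
exists (eps k / (n.-1)%:R).
  by apply/andP; split; [rewrite divr_gt0 //; lra | rewrite ltr_pdivrMr; nra].
rewrite mul0r add0r (bigD1 r) 1?eq_sym //= eqxx big1 ?addr0 ?mulr1 //.
by move=> j /andP[_ /negbTE ->].
Qed.

Lemma inH_Psi_ebasis r (x : vH) : inH x -> inH (Psi eps (ebasis r) x).
Proof.
apply: (inH_mul_bounded (M := 1)) => // k i.
by have [c /andP[c0 c1] ->] := psi_ebasis k r i; rewrite csq_real; nra.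
Qed.

Lemma Psi_ebasis_idem_eq0 r (y : vH) :
  Psi eps (ebasis r) (Psi eps (ebasis r) y) = Psi eps (ebasis r) y -> y = (fun _ _ => 0).
Proof.
move=> h; apply/funext => k; apply/funext => i.
move: h => /(congr1 (fun f => f k i)); rewrite /Psi.
have [c /andP[c0 c1] ->] := psi_ebasis k r i.
move/eqP; rewrite mulrA -subr_eq0 -mulrBl mulf_eq0 => /orP[|/eqP //].
rewrite -rmorphM -rmorphB -(rmorph0 (real_complex R)) (inj_eq (@complexI R)) subr_eq0.
by move=> /eqP hc; exfalso; nra.
Qed.

Section compression.
Variables p q : op R n.
Hypothesis p_proj : projection p.
Hypothesis qp : op_eq q p.
Hypothesis intertwine : forall (a : linf R n) (x : vH),
  inH x -> compl_op q (Psi eps a x) = Psi eps a (compl_op p x).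

Lemma compl_op_Psi_ebasis r (y : vH) : inH y -> p y = (fun _ _ => 0) ->
  compl_op q (Psi eps (ebasis r) y) = Psi eps (ebasis r) y.
Proof.
move=> hy py0; rewrite intertwine //; congr Psi.
by apply/funext => k; apply/funext => i; rewrite /compl_op py0 subr0.
Qed.

Lemma p_Psi_ebasis r (y : vH) : inH y -> p y = (fun _ _ => 0) ->
  p (Psi eps (ebasis r) y) = (fun _ _ => 0).
Proof.
move=> hy py0; rewrite -qp; last exact: inH_Psi_ebasis.
exact/compl_op_fixed/compl_op_Psi_ebasis.
Qed.

(* On the range of [1 - p], which every [Psi(e_r)] preserves, the compression is [Psi(e_r)]
   itself; so idempotence there forces that range to be [0]. *)
Lemma compl_op_idem_projection_id :
  (forall r (y : vH), inH y -> p y = (fun _ _ => 0) ->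
     compl_op q (Psi eps (ebasis r) (compl_op q (Psi eps (ebasis r) y)))
     = compl_op q (Psi eps (ebasis r) y)) ->
  op_eq p (@idop R n).
Proof.
move=> idem x hx; have [hy py0] := projection_compl_op p_proj hx.
apply: compl_op_eq0; apply/funext => k; apply/funext => r.
rewrite (@Psi_ebasis_idem_eq0 r (compl_op p x)) //; have := idem r _ hy py0.
rewrite (compl_op_Psi_ebasis r hy py0).
by rewrite (compl_op_Psi_ebasis r (inH_Psi_ebasis r hy) (p_Psi_ebasis r hy py0)).
Qed.

End compression.

Lemma star_hom_compression_id (p : op R n) : projection p ->
  (forall (a : linf R n) (x : vH), inH x -> compl_op p (Psi eps a x) = Psi eps a (compl_op p x)) ->
  star_hom (fun a x => compl_op p (Psi eps a x)) -> op_eq p (@idop R n).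
Proof.
move=> hp intertwine [_ hmul _].
apply: (compl_op_idem_projection_id hp _ intertwine) => [//|r y hy _].
by rewrite -hmul // ebasis_mul.
Qed.

Lemma triple_morphism_compression_id (p q : op R n) : projection p -> projection q ->
  (forall (a : linf R n) (x : vH), inH x -> compl_op q (Psi eps a x) = Psi eps a (compl_op p x)) ->
  triple_morphism (fun a x => compl_op q (Psi eps a x)) ->
  op_eq p (@idop R n) /\ op_eq q (@idop R n).
Proof.
move=> hp hq intertwine [_ htriple].
have qp : op_eq q p.
  by move=> x hx; apply: compl_opI; have := intertwine (fun _ => 1) x hx; rewrite !Psi1.
have adj1 : is_adjoint (fun x => compl_op q (Psi eps (fun _ => 1) x)) (compl_op q).
  by under eq_fun do rewrite Psi1; apply: is_adjoint_compl_op.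
have p_id : op_eq p (@idop R n).
  apply: (compl_op_idem_projection_id hp qp intertwine) => r y hy py0.
  have := htriple (ebasis r) (fun _ => 1) (ebasis r) _ adj1 y hy.
  by rewrite ebasis_triple !(compl_op_Psi_ebasis intertwine r hy py0); apply: esym.
by split=> // x hx; rewrite qp //; apply: p_id.
Qed.

End rigidity.

Section complete_isometry.
Variables (R : realType) (n : nat) (eps : nat -> R).
Hypothesis n_ge2 : (2 <= n)%N.
Hypothesis eps01 : forall k, 0 < eps k < 1.
Hypothesis eps_cvg0 : eps @ \oo --> 0.
Local Notation C := R[i].
Local Notation vH := (vecH R n).

Section amplification.
Variables (m : nat) (A : 'I_m -> 'I_m -> linf R n).

Definition coord_mx (r : 'I_n) : 'I_m -> 'I_m -> C := fun i j => A i j r.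

(* The amplification of [Psi] acts on the coordinate [s] of the block [k] by this matrix. *)
Definition psi_mx k (s : 'I_n) : 'I_m -> 'I_m -> C := fun i j => psi eps k (A i j) s.

Lemma mxv_psi_mx k s w : mxv (psi_mx k s) w =
  (fun i => ((1 - eps k)%:C)%C * mxv (coord_mx s) w i +
            ((eps k / (n.-1)%:R)%:C)%C * \sum_(t < n | t != s) mxv (coord_mx t) w i).
Proof.
apply/funext => i; rewrite /mxv /psi_mx /coord_mx /psi.
rewrite exchange_big /= !mulr_sumr -big_split /=; apply: eq_bigr => j _.
by rewrite -mulr_suml; ring.
Qed.

Lemma normCv_mxv_psi_mx_le (N : R) k s w :
  (forall t w, normCv (mxv (coord_mx t) w) <= N * normCv w) ->
  normCv (mxv (psi_mx k s) w) <= N * normCv w.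
Proof.
move=> hA; have /andP[e0 e1] := eps01 k.
have hm : 0 < (n.-1)%:R :> R by rewrite ltr0n predn_gt0.
set X := normCv (fun i => \sum_(t < n | t != s) mxv (coord_mx t) w i).
have hX : eps k / (n.-1)%:R * X <= eps k * (N * normCv w).
  have hS : X <= (n.-1)%:R * (N * normCv w).
    apply: le_trans (normCv_sum _ _ _) _; apply: le_trans (ler_sum _ (fun t _ => hA t w)) _.
    by rewrite sumr_const cardC1 card_ord mulr_natl.
  apply: le_trans (ler_wpM2l _ hS) _; first by rewrite divr_ge0 ?ltW.
  by rewrite [leLHS]mulrA divfK ?gt_eqF.
rewrite mxv_psi_mx; apply: le_trans (normCvD _ _) _.
rewrite !normCvZ ger0_norm ?subr_ge0 ?(ltW e1) // ger0_norm ?divr_ge0 ?(ltW e0) ?(ltW hm) //.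
rewrite -/X; have := hA s w; have := normCv_ge0 (mxv (coord_mx s) w); nra.
Qed.

Lemma mnorm_linf_ge0 : (0 <= mnorm_linf A)%E.
Proof.
have n_gt0 : (0 < n)%N by apply: ltnW.
apply: le_ereal_sup_tmp; exists (normCmx (coord_mx (Ordinal n_gt0))); first by exists (Ordinal n_gt0).
exact: normCmx_ge0.
Qed.

Lemma normCv_mxv_coord_mx_le r v : normCv v <= 1 ->
  ((normCv (mxv (coord_mx r) v))%:E <= mnorm_linf A)%E.
Proof.
move=> hv; apply: (@le_trans _ _ (normCmx (coord_mx r))); first by apply: ereal_sup_ubound; exists v.
by apply: ereal_sup_ubound; exists r.
Qed.

Lemma mnorm_BH_Psi_le : (mnorm_BH (fun i j => Psi eps (A i j)) <= mnorm_linf A)%E.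
Proof.
case hN: (mnorm_linf A) (mnorm_linf_ge0) => [N| |] // N0; last by rewrite leey.
rewrite lee_fin in N0.
have hA t w : normCv (mxv (coord_mx t) w) <= N * normCv w.
  by apply: normCv_mxv_le => v hv; rewrite -lee_fin -hN normCv_mxv_coord_mx_le.
apply: ge_ereal_sup => _ [xs [hxs xs1] <-]; rewrite lee_fin.
apply: (@le_trans _ _ (N * normHm xs)); last by rewrite -[leRHS]mulr1 ler_wpM2l.
apply: normHm_le_fiberwise => // k.
rewrite /sqnormHk exchange_big [X in _ <= _ * X]exchange_big /= mulr_sumr.
apply: ler_sum => s _.
rewrite -[X in X <= _](normCv_sqr (mxv (psi_mx k s) (fun j => xs j k s))).
rewrite -[X in _ <= _ * X](normCv_sqr (fun j => xs j k s)) -exprMn.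
rewrite lerXn2r ?nnegrE ?mulr_ge0 ?normCv_ge0 //.
exact: normCv_mxv_psi_mx_le.
Qed.

Definition single k (r : 'I_n) (c : C) : vH :=
  fun k' s => if (k' == k) && (s == r) then c else 0.

Lemma sqnormH_single k r c : sqnormH (single k r c) = (csq c)%:E.
Proof.
have hrow k' : sqnormHk (single k r c) k' = if k' == k then csq c else 0.
  rewrite /sqnormHk /single; case: (k' == k) => /=; last by rewrite big1 // => s _; rewrite csq0.
  by rewrite (bigD1 r) //= eqxx big1 ?addr0 // => s /negbTE ->; rewrite csq0.
rewrite /sqnormH (eq_eseriesr (fun k' _ => congr1 EFin (hrow k'))).
rewrite (@nneseriesD1 _ _ k) //; last by move=> k' _; rewrite lee_fin; case: ifP; rewrite ?csq_ge0.
by rewrite eqxx eseries0 ?adde0 // => k' _ /andP[_ /negbTE ->].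
Qed.

Lemma normHm_single k r (w : 'I_m -> C) : normHm (fun j => single k r (w j)) = normCv w.
Proof.
rewrite /normHm /normCv; congr Num.sqrt; apply: eq_bigr => j _.
by rewrite normH_sqr sqnormH_single.
Qed.

Lemma Psi_single k r v :
  (fun i k' s => \sum_j Psi eps (A i j) (single k r (v j)) k' s) =
  (fun i => single k r (mxv (psi_mx k r) v i)).
Proof.
apply/funext => i; apply/funext => k'; apply/funext => s.
rewrite /Psi /single /mxv /psi_mx; case: ifP => [/andP[/eqP -> /eqP ->]|_] //.
by rewrite big1 // => j _; rewrite mulr0.
Qed.

Lemma normCv_mxv_psi_mx_le_mnorm_BH k r v : normCv v <= 1 ->
  ((normCv (mxv (psi_mx k r) v))%:E <= mnorm_BH (fun i j => Psi eps (A i j)))%E.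
Proof.
move=> hv; apply: ereal_sup_ubound; exists (fun j => single k r (v j)).
  by split; [move=> j; rewrite /inH sqnormH_single ltry | rewrite normHm_single].
by rewrite Psi_single normHm_single.
Qed.

Definition psi_mx_defect r v : 'I_m -> C := fun i => mxv (coord_mx r) v i -
  ((((n.-1)%:R)^-1 : R)%:C)%C * \sum_(t < n | t != r) mxv (coord_mx t) v i.

Lemma mxv_coord_mx_psi_mx k r v :
  mxv (coord_mx r) v = (fun i => mxv (psi_mx k r) v i + ((eps k)%:C)%C * psi_mx_defect r v i).
Proof.
apply/funext => i; rewrite mxv_psi_mx /psi_mx_defect.
by rewrite rmorphM rmorphB rmorph1; ring.
Qed.

Lemma mnorm_linf_le : (mnorm_linf A <= mnorm_BH (fun i j => Psi eps (A i j)))%E.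
Proof.
apply: ge_ereal_sup => _ [r _ <-]; apply: ge_ereal_sup => _ [v /= hv <-].
have hk k := normCv_mxv_psi_mx_le_mnorm_BH k r hv.
case hB: (mnorm_BH _) hk => [B| |] hk; last 2 first.
- by rewrite leey.
- by have := hk 0%N; rewrite leeNy_eq.
rewrite lee_fin; apply: (le_of_le_addr_cvg0 (c := normCv (psi_mx_defect r v)) eps_cvg0) => k.
change (normCv (mxv (coord_mx r) v) <= B + eps k * normCv (psi_mx_defect r v)).
rewrite (mxv_coord_mx_psi_mx k); apply: le_trans (normCvD _ _) _.
rewrite normCvZ ger0_norm; last by case/andP: (eps01 k) => /ltW.
by rewrite lerD2r -lee_fin.
Qed.

End amplification.

Theorem Psi_unital_complete_isometry : unital_complete_isometry (@Psi R n eps).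
Proof.
split=> [c a b x _|x _|m A]; first 1 last.
- by rewrite Psi1.
- by apply/eqP; rewrite eq_le mnorm_linf_le mnorm_BH_Psi_le.
apply/funext => k; apply/funext => i.
by rewrite /Psi /psi big_split /= -mulr_sumr; ring.
Qed.

End complete_isometry.

Theorem mainTheorem17 (R : realType) (n : nat) (eps : nat -> R) :
  (2 <= n)%N ->
  (forall k, 0 < eps k < 1) ->
  (forall k, eps k.+1 < eps k) ->
  eps @ \oo --> 0 ->
  unital_complete_isometry (@Psi R n eps)
  /\ (forall p q : op R n, projection p -> projection q ->
        (forall (a : linf R n) (x : vecH R n), inH x ->
           (fun k i => Psi eps a x k i - q (Psi eps a x) k i)
           = Psi eps a (fun k i => x k i - p x k i)) ->
        triple_morphism (fun a x k i => Psi eps a x k i - q (Psi eps a x) k i) ->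
        op_eq p (@idop R n) /\ op_eq q (@idop R n))
  /\ (forall p : op R n, projection p ->
        (forall (a : linf R n) (x : vecH R n), inH x ->
           (fun k i => Psi eps a x k i - p (Psi eps a x) k i)
           = Psi eps a (fun k i => x k i - p x k i)) ->
        star_hom (fun a x k i => Psi eps a x k i - p (Psi eps a x) k i) ->
        op_eq p (@idop R n)).
Proof.
move=> n_ge2 eps01 _ eps_cvg0.
split; first exact: Psi_unital_complete_isometry.
split=> [p q | p].
- exact: triple_morphism_compression_id.
- exact: star_hom_compression_id.
Qed.
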